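(* Let $(q_n),(r_n)$ be complex sequences vanishing faster than any negative power of $|n|$ as $n\to\pm\infty$ with $1-q_nr_n\neq0$ and $1+q_nr_{n+1}\neq0$ for all $n\in\mathbb Z$. Set $D_n=\prod_{j=-\infty}^n(1-q_jr_j)$, $E_n=\prod_{j=-\infty}^n(1+q_jr_{j+1})$, $D_\infty=\prod_{j\in\mathbb Z}(1-q_jr_j)$, $E_\infty=\prod_{j\in\mathbb Z}(1+q_jr_{j+1})$, and define $$u_n=q_n\frac{E_{n-1}}{D_n},\quad v_n=(-r_n+r_{n+1}-q_nr_nr_{n+1})\frac{D_{n-1}}{E_n},\quad p_n=(q_n-q_{n+1}-q_nq_{n+1}r_{n+1})\frac{E_{n-1}}{D_{n+1}},\quad s_n=r_{n+1}\frac{D_n}{E_n}.$$ Then $$1-u_nv_n=\frac1{(1-q_nr_n)(1+q_nr_{n+1})},\qquad 1-p_ns_n=\frac1{(1-q_{n+1}r_{n+1})(1+q_nr_{n+1})},$$ and, with $D_n^{(u,v)}=\prod_{j\le n}(1-u_jv_j)$, $D_\infty^{(u,v)}=\prod_{j\in\mathbb Z}(1-u_jv_j)$, $D_n^{(p,s)}=\prod_{j\le n}(1-p_js_j)$, $D_\infty^{(p,s)}=\prod_{j\in\mathbb Z}(1-p_js_j)$, $$D_n^{(u,v)}=\frac1{D_nE_n},\quad D_\infty^{(u,v)}=\frac1{D_\infty E_\infty},\quad D_n^{(p,s)}=\frac1{D_{n+1}E_n},\quad D_\infty^{(p,s)}=\frac1{D_\infty E_\infty}.$$ *)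

From HB Require Import structures.
From mathcomp Require Import all_boot all_order all_algebra.
From mathcomp Require Import complex.
From mathcomp Require Import all_classical all_reals all_analysis.
Set Implicit Arguments. Unset Strict Implicit. Unset Printing Implicit Defensive.
Import Order.TTheory GRing.Theory Num.Theory.
Import numFieldNormedType.Exports.
Local Open Scope ring_scope.
Local Open Scope classical_set_scope.
Local Open Scope ring_scope.

Definition rapid_decay (R : realType) (f : int -> R[i]) : Prop :=
  forall k : nat, forall eps : R, 0 < eps ->
    exists N : nat, forall n : int, (N <= `|n|)%N ->
      ((`|n|%:R : R[i]) ^+ k * `|f n| <= (eps%:C)%C).

(* Convergence is in the standard (norm) topology of C = R[i]; the alias ^o
   only serves to pick up the normed-field topology instance. *)

Definition lprod_to (R : realType) (f : int -> R[i]) (n : int) (L : R[i]) : Prop :=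
  (fun m : nat => (\prod_(i < m) f (n - i%:Z) : (R[i])^o)) @ \oo --> (L : (R[i])^o).

Definition zprod_to (R : realType) (f : int -> R[i]) (L : R[i]) : Prop :=
  (fun m : nat => (\prod_(i < (2 * m).+1) f (i%:Z - m%:Z) : (R[i])^o)) @ \oo
    --> (L : (R[i])^o).

Definition useq (R : realType) (q r D E : int -> R[i]) (n : int) : R[i] :=
  q n * E (n - 1) / D n.
Definition vseq (R : realType) (q r D E : int -> R[i]) (n : int) : R[i] :=
  (- r n + r (n + 1) - q n * r n * r (n + 1)) * D (n - 1) / E n.
Definition pseq (R : realType) (q r D E : int -> R[i]) (n : int) : R[i] :=
  (q n - q (n + 1) - q n * q (n + 1) * r (n + 1)) * E (n - 1) / D (n + 1).
Definition sseq (R : realType) (q r D E : int -> R[i]) (n : int) : R[i] :=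
  r (n + 1) * D n / E n.

From HB Require Import structures.
From mathcomp Require Import all_boot all_order all_algebra.
From mathcomp Require Import complex.
From mathcomp Require Import all_classical all_reals all_analysis.
Import Order.TTheory GRing.Theory Num.Theory.
Import numFieldNormedType.Exports.
Local Open Scope ring_scope.
Local Open Scope classical_set_scope.
Local Open Scope ring_scope.

From mathcomp Require Import zify ring lra.
Import Normc.
Set Implicit Arguments. Unset Strict Implicit. Unset Printing Implicit Defensive.

(* The recursions D_n = D_(n-1) (1 - q_n r_n) and E_n = E_(n-1) (1 + q_n r_(n+1))
   turn the formulas for 1 - u_n v_n and 1 - p_n s_n into rational identities,
   which exhibit every factor of the new products as the reciprocal of a
   product of two factors of the old ones; the product formulas then follow
   by continuity of multiplication and inversion.  Rapid decay makes q_j r_j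
   and q_j r_(j+1) o(|j|^-2), hence absolutely summable, and a product of
   nonzero factors 1 + a_j with summable |a_j| converges to a nonzero limit:
   once the tail sum of the |a_j| is at most 1/2, the tail product differs
   from 1 by at most twice that sum, so the partial products are Cauchy and
   stay away from 0. *)

Section ComplexNorm.
Variable R : realType.
Local Notation C := R[i].
Implicit Types (a : R) (z w : C).

Lemma normcE z : `|z| = ((normc z : R)%:C)%C.
Proof. by case: z => a b; rewrite normc_def. Qed.

Lemma normc_ge0 z : 0 <= normc z.
Proof. by case: z => a b; exact: sqrtr_ge0. Qed.

Lemma normc_gt0 z : (0 < normc z) = (z != 0).
Proof. by rewrite -ltcR -normcE normr_gt0. Qed.

Lemma normc_subr_ge z w : normc z - normc w <= normc (z - w).
Proof. by have := le_normcD (z - w) w; rewrite subrK; lra. Qed.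

Lemma normc_ge_Re_Im z : `|complex.Re z| <= normc z /\ `|complex.Im z| <= normc z.
Proof.
case: z => a b; rewrite /normc /= -!sqrtr_sqr.
by split; apply: ler_wsqrtr; rewrite ?lerDl ?lerDr sqr_ge0.
Qed.

Lemma normc_le_Re_Im z : normc z <= `|complex.Re z| + `|complex.Im z|.
Proof.
case: z => a b; rewrite /normc /=.
rewrite -[X in _ <= X]ger0_norm ?addr_ge0 // -sqrtr_sqr; apply: ler_wsqrtr.
have := mulr_ge0 (normr_ge0 a) (normr_ge0 b).
by rewrite sqrrD !real_normK ?num_real // mulr2n; lra.
Qed.

Lemma cvgcP (u : nat -> C) (L : C) :
  (u : nat -> C^o) @ \oo --> (L : C^o) <->
  forall e : R, 0 < e -> \forall t \near \oo, normc (L - u t) <= e.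
Proof.
split=> [/cvgrPdist_le u_cvg e e_gt0 | u_cvg].
  near=> t; suff : `|L - u t| <= e%:C%C by rewrite normcE lecR.
  by near: t; apply: u_cvg; rewrite ltcR.
apply/cvgrPdist_le => eps; rewrite ltcE /= => /andP[/eqP Im_eps e_gt0].
have -> : eps = (complex.Re eps)%:C%C by case: eps Im_eps {e_gt0} => ? ? /= ->.
near=> t; rewrite normcE lecR.
by near: t; apply: u_cvg.
Unshelve. all: by end_near.
Qed.

End ComplexNorm.

Section Completeness.
Variable R : realType.
Local Notation C := R[i].

Lemma cvg_real_cauchy (u : nat -> R) :
  (forall e, 0 < e -> exists N, forall n, (N <= n)%N -> `|u n - u N| <= e) ->
  cvgn u.
Proof.
move=> u_cauchy; apply/cauchy_cvgP/cauchy_exP => e e_gt0.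
have [N uN] := u_cauchy (e / 2) (divr_gt0 e_gt0 (ltr0Sn _ 1)).
exists (u N), N => // n /uN un_le.
by rewrite /= -ball_normE /= distrC; apply: le_lt_trans un_le _; lra.
Qed.

Lemma cvg_complex_cauchy (u : nat -> C) :
  (forall e, 0 < e -> exists N, forall n, (N <= n)%N -> normc (u n - u N) <= e) ->
  exists L, (u : nat -> C^o) @ \oo --> (L : C^o).
Proof.
move=> u_cauchy.
have Re_cvg : cvgn (fun n => complex.Re (u n)).
  apply: cvg_real_cauchy => e /u_cauchy[N uN]; exists N => n /uN.
  by apply: le_trans; rewrite -raddfB; case: (normc_ge_Re_Im (u n - u N)).
have Im_cvg : cvgn (fun n => complex.Im (u n)).
  apply: cvg_real_cauchy => e /u_cauchy[N uN]; exists N => n /uN.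
  by apply: le_trans; rewrite -raddfB; case: (normc_ge_Re_Im (u n - u N)).
exists (limn (fun n => complex.Re (u n)) +i* limn (fun n => complex.Im (u n)))%C.
apply/cvgcP => e e_gt0; near=> t.
have Re_near : `|limn (fun n => complex.Re (u n)) - complex.Re (u t)| <= e / 2.
  by near: t; apply: (cvgrPdist_le _ _).1 Re_cvg _ (divr_gt0 e_gt0 (ltr0Sn _ 1)).
have Im_near : `|limn (fun n => complex.Im (u n)) - complex.Im (u t)| <= e / 2.
  by near: t; apply: (cvgrPdist_le _ _).1 Im_cvg _ (divr_gt0 e_gt0 (ltr0Sn _ 1)).
by apply: le_trans (normc_le_Re_Im _) _; rewrite !raddfB /=; lra.
Unshelve. all: by end_near.
Qed.

End Completeness.

Section InfiniteProduct.
Variable R : realType.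
Local Notation C := R[i].

Definition small_tails (a : nat -> R) : Prop :=
  forall e, 0 < e -> exists N, forall m k, (N <= m)%N -> \sum_(i < k) a (m + i)%N <= e.

Lemma normc_prod_sub1_le (g : nat -> C) k :
  \sum_(i < k) normc (g i - 1) <= 1 / 2 ->
  normc (\prod_(i < k) g i - 1) <= 2 * \sum_(i < k) normc (g i - 1).
Proof.
elim: k => [|k IH]; first by rewrite !big_ord0 subrr mulr0 normc0.
rewrite !big_ord_recr /=.
set s := \sum_(i < k) _; set y := normc (g k - 1); set P := \prod_(i < k) _ => sy_le.
have y_ge0 : 0 <= y := normc_ge0 _.
have s_ge0 : 0 <= s by apply: sumr_ge0 => i _; exact: normc_ge0.
have {}IH : normc (P - 1) <= 2 * s by apply: IH; rewrite -/s; lra.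
have gk_le : normc (g k) <= 1 + y.
  by have := le_normcD 1 (g k - 1); rewrite addrC subrK normc1.
have -> : P * g k - 1 = (P - 1) * g k + (g k - 1) by ring.
apply: le_trans (le_normcD _ _) _; rewrite normcM -/y.
have : normc (P - 1) * normc (g k) <= 2 * s * (1 + y).
  by apply: ler_pM; rewrite ?normc_ge0.
have : 0 <= y * (1 - 2 * s) by apply: mulr_ge0; lra.
nra.
Qed.

Lemma normc_prod_split_le (g : nat -> C) m k :
  \sum_(i < k) normc (g (m + i)%N - 1) <= 1 / 2 ->
  normc (\prod_(i < m + k) g i - \prod_(i < m) g i) <=
    2 * normc (\prod_(i < m) g i) * \sum_(i < k) normc (g (m + i)%N - 1).
Proof.
move=> /(normc_prod_sub1_le (g := fun i => g (m + i)%N)) prod_le.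
rewrite big_split_ord -{2}[\prod_(i < m) g i]mulr1 -mulrBr normcM (mulrC 2) -mulrA.
by apply: ler_wpM2l prod_le; exact: normc_ge0.
Qed.

Lemma prod_cvg_neq0 (g : nat -> C) :
  (forall i, g i != 0) -> small_tails (fun i => normc (g i - 1)) ->
  exists2 L, L != 0 & (fun m => \prod_(i < m) g i : C^o) @ \oo --> (L : C^o).
Proof.
move=> g_neq0 g_tails; set P := fun m => \prod_(i < m) g i.
have [N0 tails0] := g_tails (1 / 4) ltac:(lra).
have tail_ge0 m k : 0 <= \sum_(i < k) normc (g (m + i)%N - 1).
  by apply: sumr_ge0 => i _; exact: normc_ge0.
set B := normc (P N0).
have B_gt0 : 0 < B by rewrite normc_gt0; apply/prodf_neq0 => i _.
have P_near n : (N0 <= n)%N -> normc (P n - P N0) <= B / 2.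
  move=> /subnKC <-; have tail_quarter := tails0 N0 (n - N0)%N (leqnn _).
  apply: le_trans (normc_prod_split_le _) _; first lra.
  have := tail_ge0 N0 (n - N0)%N.
  rewrite -/B; nra.
have P_bounds n : (N0 <= n)%N -> B / 2 <= normc (P n) <= 3 / 2 * B.
  move=> /P_near Pn_le; have := normc_subr_ge (P n) (P N0).
  have := normc_subr_ge (P N0) (P n); rewrite -(opprB (P n)) normcN -/B; lra.
have [L P_cvg] : exists L, (P : nat -> C^o) @ \oo --> (L : C^o).
  apply: cvg_complex_cauchy => e e_gt0.
  have e3B_gt0 : 0 < e / (3 * B) by rewrite divr_gt0 // mulr_gt0.
  have [N1 tails1] := g_tails _ e3B_gt0.
  exists (maxn N0 N1) => n /subnKC <-; set N := maxn N0 N1.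
  have /andP[_ PN_le] := P_bounds N (leq_maxl _ _).
  have tail_small := tails1 N (n - N)%N (leq_maxr _ _).
  have tail_quarter := tails0 N (n - N)%N (leq_maxl _ _).
  apply: le_trans (normc_prod_split_le _) _; first lra.
  have := tail_ge0 N (n - N)%N.
  have eE : 3 * B * (e / (3 * B)) = e by field; rewrite gt_eqF.
  nra.
exists L => //; apply/negP => /eqP L0.
move: P_cvg; rewrite L0 => /cvgcP /(_ (B / 4)) P_small.
have [N2 _ PN2_le] := P_small ltac:(lra).
have /andP[PN_ge _] := P_bounds (N0 + N2)%N (leq_addr _ _).
have := PN2_le (N0 + N2)%N (leq_addl _ _); rewrite sub0r normcN; lra.
Qed.

End InfiniteProduct.

Section Decay.
Variable R : realType.
Local Notation C := R[i].

Definition sqr_decay (a : int -> R) : Prop :=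
  forall e, 0 < e -> exists N : nat, forall j : int, (N <= `|j|)%N -> `|j|%:R ^+ 2 * a j <= e.

Lemma sum_inv_sqr_le (t k : nat) : (0 < t)%N ->
  \sum_(i < k) ((t + i)%:R ^+ 2)^-1 <= 2 / t%:R - 2 / (t + k)%:R :> R.
Proof.
move=> t_gt0; elim: k => [|k IH]; first by rewrite big_ord0 addn0 subrr.
rewrite big_ord_recr /= addnS -[(t + k).+1%:R]natr1.
set T := (t + k)%:R in IH *.
have T_ge1 : 1 <= T by rewrite /T ler1n addn_gt0 t_gt0.
suff : ((T ^+ 2)^-1 <= 2 / T - 2 / (T + 1)) by lra.
rewrite -subr_ge0.
have -> : 2 / T - 2 / (T + 1) - (T ^+ 2)^-1 = (T - 1) / (T ^+ 2 * (T + 1)).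
  by field; rewrite !gt_eqF //; lra.
by apply: divr_ge0; rewrite ?mulr_ge0 ?sqr_ge0 //; lra.
Qed.

Lemma sqr_decay_small_tails (a : int -> R) (J : nat -> int) (c : nat) :
  (forall j, 0 <= a j) -> sqr_decay a -> (forall i, (i <= `|J i| + c)%N) ->
  small_tails (fun i => a (J i)).
Proof.
move=> a_ge0 a_decay J_large e e_gt0.
have [N aN] := a_decay (e / 2) (divr_gt0 e_gt0 (ltr0Sn _ 1)).
exists (c + N + 1)%N => m k m_ge; set t := (m - c)%N.
have t_gt0 : (0 < t)%N by rewrite /t; lia.
have a_le (i : 'I_k) : a (J (m + i)%N) <= e / 2 * ((t + i)%:R ^+ 2)^-1.
  have j_ge : (t + i <= `|J (m + i)%N|)%N by have := J_large (m + i)%N; rewrite /t; lia.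
  have T_gt0 : 0 < (t + i)%:R ^+ 2 :> R by rewrite exprn_gt0 // ltr0n addn_gt0 t_gt0.
  rewrite ler_pdivlMr //; apply: (le_trans _ (aN (J (m + i)%N) _)).
    rewrite mulrC; apply: ler_wpM2r; first exact: a_ge0.
    by rewrite ler_pXn2r ?nnegrE ?ler0n ?ler_nat.
  by rewrite /t in j_ge; lia.
apply: le_trans (ler_sum _ (fun i _ => a_le i)) _.
have sum_le2 : \sum_(i < k) ((t + i)%:R ^+ 2)^-1 <= 2 :> R.
  have := sum_inv_sqr_le k t_gt0.
  have : 2 / t%:R <= 2 :> R by rewrite ler_pdivrMr ?ltr0n // ler_peMr ?ler1n.
  have : 0 <= 2 / (t + k)%:R :> R by rewrite divr_ge0 ?ler0n.
  lra.
rewrite -mulr_sumr; apply: le_trans (ler_wpM2l _ sum_le2) _; last lra.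
by rewrite divr_ge0 ?ltW.
Qed.

Lemma normc_rapid_decay (f : int -> C) k e : rapid_decay f -> 0 < e ->
  exists N : nat, forall n : int, (N <= `|n|)%N -> `|n|%:R ^+ k * normc (f n) <= e.
Proof.
move=> f_decay /(f_decay k)[N fN]; exists N => n /fN.
by rewrite normcE -(rmorph_nat (real_complex R)) -rmorphXn -rmorphM lecR.
Qed.

Lemma rapid_decay_mul (q r : int -> C) (d : int) :
  rapid_decay q -> rapid_decay r -> sqr_decay (fun j => normc (q j * r (j + d))).
Proof.
move=> q_decay r_decay e e_gt0.
have [N1 qN] := normc_rapid_decay 2 q_decay e_gt0.
have [N2 rN] := normc_rapid_decay 0 r_decay ltr01.
exists (N1 + N2 + `|d|)%N => j j_ge.
have q_le := qN j ltac:(lia).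
have := rN (j + d) ltac:(lia); rewrite expr0 mul1r => r_le.
have q_ge0 : 0 <= `|j|%:R ^+ 2 * normc (q j) by rewrite mulr_ge0 ?normc_ge0.
have := normc_ge0 (r (j + d)).
rewrite normcM mulrA; nra.
Qed.

End Decay.

Section BilateralProduct.
Variable R : realType.
Local Notation C := R[i].

Definition rprod_to (f : int -> C) (n : int) (L : C) : Prop :=
  (fun m : nat => (\prod_(i < m) f (n + i%:Z) : C^o)) @ \oo --> (L : C^o).

Lemma prod_cvg_neq0_decay (f : int -> C) (J : nat -> int) (c : nat) :
  (forall j, f j != 0) -> sqr_decay (fun j => normc (f j - 1)) ->
  (forall i, (i <= `|J i| + c)%N) ->
  exists2 L, L != 0 & (fun m => \prod_(i < m) f (J i) : C^o) @ \oo --> (L : C^o).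
Proof.
move=> f_neq0 f_decay J_large.
apply: (prod_cvg_neq0 (g := f \o J)) => [i|]; first exact: f_neq0.
apply: (sqr_decay_small_tails (a := fun j => normc (f j - 1))) J_large => // j.
exact: normc_ge0.
Qed.

Lemma lprod_exists (f : int -> C) n :
  (forall j, f j != 0) -> sqr_decay (fun j => normc (f j - 1)) ->
  exists2 L, L != 0 & lprod_to f n L.
Proof.
move=> f_neq0 f_decay.
by apply: (prod_cvg_neq0_decay (J := fun i : nat => n - i%:Z) (c := `|n|%N)) => // i; lia.
Qed.

Lemma rprod_exists (f : int -> C) n :
  (forall j, f j != 0) -> sqr_decay (fun j => normc (f j - 1)) ->
  exists2 L, L != 0 & rprod_to f n L.
Proof.
move=> f_neq0 f_decay.
by apply: (prod_cvg_neq0_decay (J := fun i : nat => n + i%:Z) (c := `|n|%N)) => // i; lia.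
Qed.

Lemma lprod_to_rec (f : int -> C) n L L' :
  lprod_to f n L -> lprod_to f (n - 1) L' -> L = L' * f n.
Proof.
have seqE : (fun m : nat => \prod_(i < m.+1) f (n - i%:Z)) =
    (fun m => f n * \prod_(i < m) f (n - 1 - i%:Z)).
  apply/funext => m; rewrite big_ord_recl /= subr0; congr (_ * _).
  by apply: eq_bigr => i _; congr f; rewrite /bump /=; lia.
rewrite /lprod_to -cvg_shiftS /= seqE mulrC => fL /(cvgMl_tmp (a := f n)) fL'.
exact: (cvg_unique _ fL fL').
Qed.

Lemma rprod_to_rec (f : int -> C) n L L' :
  rprod_to f n L -> rprod_to f (n + 1) L' -> L = f n * L'.
Proof.
have seqE : (fun m : nat => \prod_(i < m.+1) f (n + i%:Z)) =
    (fun m => f n * \prod_(i < m) f (n + 1 + i%:Z)).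
  apply/funext => m; rewrite big_ord_recl /= addr0; congr (_ * _).
  by apply: eq_bigr => i _; congr f; rewrite /bump /=; lia.
rewrite /rprod_to -cvg_shiftS /= seqE => fL /(cvgMl_tmp (a := f n)) fL'.
exact: (cvg_unique _ fL fL').
Qed.

Lemma zprod_to_split (f g : int -> C) n L L' :
  (forall j, g j = f (j + n)) -> lprod_to f n L -> rprod_to f (n + 1) L' ->
  zprod_to g (L * L').
Proof.
move=> gE fL fL'; rewrite /zprod_to.
have -> : (fun m : nat => \prod_(i < (2 * m).+1) g (i%:Z - m%:Z) : C^o) =
    (fun m => \prod_(i < m.+1) f (n - i%:Z) * \prod_(i < m) f (n + 1 + i%:Z)).
  apply/funext => m; rewrite (_ : (2 * m).+1 = m.+1 + m)%N; last by lia.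
  rewrite big_split_ord /=; congr (_ * _).
    rewrite (reindex_inj rev_ord_inj) /=; apply: eq_bigr => i _.
    by rewrite gE; congr f; have := ltn_ord i; rewrite subSS; lia.
  by apply: eq_bigr => i _; rewrite gE; congr f; lia.
apply: cvgM => //.
by rewrite (cvg_shiftS (fun m => \prod_(i < m) f (n - i%:Z) : C^o)).
Qed.

Lemma lprod_to_shift (f : int -> C) n L :
  lprod_to f (n + 1) L -> lprod_to (fun j => f (j + 1)) n L.
Proof.
rewrite /lprod_to /=.
suff -> : (fun m : nat => \prod_(i < m) f (n - i%:Z + 1)) =
    (fun m => \prod_(i < m) f (n + 1 - i%:Z)) by [].
by apply/funext => m; apply: eq_bigr => i _; rewrite addrAC.
Qed.

Lemma cvg_prod_mulV (N : nat -> nat) (F G : nat -> nat -> C) L M : L * M != 0 ->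
  (fun m => \prod_(i < N m) F m i : C^o) @ \oo --> (L : C^o) ->
  (fun m => \prod_(i < N m) G m i : C^o) @ \oo --> (M : C^o) ->
  (fun m => \prod_(i < N m) (F m i * G m i)^-1 : C^o) @ \oo --> ((L * M)^-1 : C^o).
Proof.
move=> LM_neq0 FL GM.
have -> : (fun m => \prod_(i < N m) (F m i * G m i)^-1 : C^o) =
    (fun m => ((\prod_(i < N m) F m i) * \prod_(i < N m) G m i)^-1).
  by apply/funext => m; rewrite -big_split -prodfV.
exact: (cvgV (f := fun m => (\prod_(i < N m) F m i) * \prod_(i < N m) G m i)) (cvgM FL GM).
Qed.

Lemma lprod_to_mulV (f g : int -> C) n L M : L * M != 0 ->
  lprod_to f n L -> lprod_to g n M -> lprod_to (fun j => (f j * g j)^-1) n ((L * M)^-1).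
Proof.
exact: (cvg_prod_mulV (N := id)
  (F := fun _ i => f (n - i%:Z)) (G := fun _ i => g (n - i%:Z))).
Qed.

Lemma zprod_to_mulV (f g : int -> C) L M : L * M != 0 ->
  zprod_to f L -> zprod_to g M -> zprod_to (fun j => (f j * g j)^-1) ((L * M)^-1).
Proof.
exact: (cvg_prod_mulV (N := fun m => (2 * m).+1)
  (F := fun m i => f (i%:Z - m%:Z)) (G := fun m i => g (i%:Z - m%:Z))).
Qed.

Lemma bilateral_prod (f : int -> C) :
  (forall j, f j != 0) -> sqr_decay (fun j => normc (f j - 1)) ->
  exists (D : int -> C) (Dinf : C),
    [/\ forall n, D n != 0, forall n, lprod_to f n (D n), Dinf != 0,
        zprod_to f Dinf & zprod_to (fun j => f (j + 1)) Dinf].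
Proof.
move=> f_neq0 f_decay.
have fD_ex n : exists L, L != 0 /\ lprod_to f n L.
  by have [L L_neq0 fL] := lprod_exists n f_neq0 f_decay; exists L.
have [D fD] := choice fD_ex.
have [R1 R1_neq0 fR1] := rprod_exists 1 f_neq0 f_decay.
have [R2 _ fR2] := rprod_exists (1 + 1) f_neq0 f_decay.
exists D, (D 0 * R1); split => [n|n|||].
- exact: (fD n).1.
- exact: (fD n).2.
- by rewrite mulf_neq0 ?(fD 0).1.
- by apply: zprod_to_split (fD 0).2 _ => [j|]; rewrite ?addr0 ?add0r.
have -> : D 0 * R1 = D 1 * R2.
  by rewrite (rprod_to_rec fR1 fR2) (lprod_to_rec (fD 1).2 (fD 0).2) mulrA.
exact: zprod_to_split (fD 1).2 fR2.
Qed.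

End BilateralProduct.

Section Identities.
Variables (R : realType) (q r D E : int -> R[i]) (n : int).

Lemma one_sub_useq_vseq :
  D n = D (n - 1) * (1 - q n * r n) -> E n = E (n - 1) * (1 + q n * r (n + 1)) ->
  D (n - 1) != 0 -> E (n - 1) != 0 -> 1 - q n * r n != 0 -> 1 + q n * r (n + 1) != 0 ->
  1 - useq q r D E n * vseq q r D E n = ((1 - q n * r n) * (1 + q n * r (n + 1)))^-1.
Proof.
move=> D_rec E_rec D_neq0 E_neq0 a_neq0 b_neq0; rewrite /useq /vseq D_rec E_rec.
by field; rewrite D_neq0 E_neq0 a_neq0 b_neq0.
Qed.

Lemma one_sub_pseq_sseq :
  D (n + 1) = D n * (1 - q (n + 1) * r (n + 1)) ->
  E n = E (n - 1) * (1 + q n * r (n + 1)) ->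
  D n != 0 -> E (n - 1) != 0 -> 1 - q (n + 1) * r (n + 1) != 0 -> 1 + q n * r (n + 1) != 0 ->
  1 - pseq q r D E n * sseq q r D E n =
    ((1 - q (n + 1) * r (n + 1)) * (1 + q n * r (n + 1)))^-1.
Proof.
move=> D_rec E_rec D_neq0 E_neq0 a_neq0 b_neq0; rewrite /pseq /sseq D_rec E_rec.
by field; rewrite D_neq0 E_neq0 a_neq0 b_neq0.
Qed.

End Identities.

Theorem proposition3p1 (R : realType) (q r : int -> R[i])
  (hq : rapid_decay q) (hr : rapid_decay r)
  (hqr : forall n : int, 1 - q n * r n != 0)
  (hqr1 : forall n : int, 1 + q n * r (n + 1) != 0) :
  exists (D E : int -> R[i]) (Dinf Einf : R[i]),
    (forall n : int, lprod_to (fun j => 1 - q j * r j) n (D n)) /\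
    (forall n : int, lprod_to (fun j => 1 + q j * r (j + 1)) n (E n)) /\
    zprod_to (fun j => 1 - q j * r j) Dinf /\
    zprod_to (fun j => 1 + q j * r (j + 1)) Einf /\
    let u := useq q r D E in
    let v := vseq q r D E in
    let p := pseq q r D E in
    let s := sseq q r D E in
    (forall n : int,
        1 - u n * v n = 1 / ((1 - q n * r n) * (1 + q n * r (n + 1)))) /\
    (forall n : int,
        1 - p n * s n = 1 / ((1 - q (n + 1) * r (n + 1)) * (1 + q n * r (n + 1)))) /\
    (forall n : int, lprod_to (fun j => 1 - u j * v j) n (1 / (D n * E n))) /\
    zprod_to (fun j => 1 - u j * v j) (1 / (Dinf * Einf)) /\
    (forall n : int, lprod_to (fun j => 1 - p j * s j) n (1 / (D (n + 1) * E n))) /\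
    zprod_to (fun j => 1 - p j * s j) (1 / (Dinf * Einf)).
Proof.
pose a j := 1 - q j * r j; pose b j := 1 + q j * r (j + 1).
have a_decay : sqr_decay (fun j => normc (a j - 1)).
  suff -> : (fun j => normc (a j - 1)) = (fun j => normc (q j * r (j + 0))).
    exact: rapid_decay_mul.
  by apply/funext => j; rewrite /a addr0 addrAC subrr add0r normcN.
have b_decay : sqr_decay (fun j => normc (b j - 1)).
  suff -> : (fun j => normc (b j - 1)) = (fun j => normc (q j * r (j + 1))).
    exact: rapid_decay_mul.
  by apply/funext => j; rewrite /b addrAC subrr add0r.
have [D [Dinf [D_neq0 hD Dinf_neq0 zD zD1]]] := bilateral_prod hqr a_decay.
have [E [Einf [E_neq0 hE Einf_neq0 zE _]]] := bilateral_prod hqr1 b_decay.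
have D_rec n : D n = D (n - 1) * a n := lprod_to_rec (hD n) (hD (n - 1)).
have E_rec n : E n = E (n - 1) * b n := lprod_to_rec (hE n) (hE (n - 1)).
have uvE n : 1 - useq q r D E n * vseq q r D E n = (a n * b n)^-1.
  exact: one_sub_useq_vseq (D_rec n) (E_rec n) (D_neq0 _) (E_neq0 _) (hqr n) (hqr1 n).
have psE n : 1 - pseq q r D E n * sseq q r D E n = (a (n + 1) * b n)^-1.
  apply: one_sub_pseq_sseq (E_rec n) (D_neq0 _) (E_neq0 _) (hqr _) (hqr1 n).
  by rewrite D_rec addrK.
have DE_neq0 : Dinf * Einf != 0 by rewrite mulf_neq0.
exists D, E, Dinf, Einf; do 4 (split; first done).
move=> u v p s; rewrite div1r.
have -> : (fun j => 1 - u j * v j) = (fun j => (a j * b j)^-1) := funext uvE.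
have -> : (fun j => 1 - p j * s j) = (fun j => (a (j + 1) * b j)^-1) := funext psE.
split; first by move=> n; rewrite div1r uvE.
split; first by move=> n; rewrite div1r psE.
split.
  by move=> n; rewrite div1r; apply: lprod_to_mulV (hD n) (hE n); rewrite mulf_neq0.
split; first exact: zprod_to_mulV DE_neq0 zD zE.
split; last exact: zprod_to_mulV DE_neq0 zD1 zE.
move=> n; rewrite div1r.
by apply: lprod_to_mulV (lprod_to_shift (hD (n + 1))) (hE n); rewrite mulf_neq0.
Qed.
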